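(* The following are equivalent: (1) $C(X)_\mathcal{P}$ is clean; (2) $C(X)_\mathcal{P}$ is weakly clean; (3) $C(X)_\mathcal{P}$ is semiclean.
   Context: Let $(X,\tau)$ be a $T_1$ topological space and $\mathcal{P}$ an ideal of closed subsets of $X$ (a nonempty family of closed sets closed under finite unions and under taking closed subsets). For $f\colon X\to\mathbb{R}$, $D_f$ denotes the set of points of discontinuity of $f$, and $C(X)_\mathcal{P}=\{f\colon X\to\mathbb{R} : \overline{D_f}\in\mathcal{P}\}$, a commutative ring with unity under pointwise operations. A ring $R$ is clean if every element is $u+e$ with $u$ a unit and $e$ idempotent; weakly clean if every element is $u+e$ or $u-e$ with $u$ a unit and $e$ idempotent; semiclean if every element is $u+a$ with $u$ a unit and $a$ periodic, i.e. $a^k=a^l$ for some positive integers $k\neq l$. *)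

(* The reals are an arbitrary [R : realType]
   (any two realTypes are isomorphic, so this is the paper's R). *)
From HB Require Import structures.
From mathcomp Require Import all_boot all_order all_algebra.
From mathcomp Require Import all_classical all_reals all_analysis.
Set Implicit Arguments. Unset Strict Implicit. Unset Printing Implicit Defensive.
Import Order.TTheory GRing.Theory Num.Theory.
Import numFieldNormedType.Exports.
Local Open Scope classical_set_scope.
Local Open Scope ring_scope.

Definition closed_ideal {X : topologicalType} (P : set (set X)) : Prop :=
  [/\ P !=set0,
      (forall A, P A -> closed A),
      (forall A B, P A -> P B -> P (A `|` B)) &
      (forall A B, P A -> closed B -> B `<=` A -> P B)].

Definition discont {X : topologicalType} {R : realType} (f : X -> R) : set X :=
  [set x : X | ~ (f @ x --> f x)].

Definition CP {X : topologicalType} {R : realType} (P : set (set X))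
  (f : X -> R) : Prop := P (closure (discont f)).

Definition CP_unit {X : topologicalType} {R : realType} (P : set (set X))
  (u : X -> R) : Prop :=
  CP P u /\ exists v : X -> R, CP P v /\ forall x, u x * v x = 1.

Definition CP_idem {X : topologicalType} {R : realType} (P : set (set X))
  (e : X -> R) : Prop :=
  CP P e /\ forall x, e x * e x = e x.

Definition CP_periodic {X : topologicalType} {R : realType} (P : set (set X))
  (a : X -> R) : Prop :=
  CP P a /\ exists k l : nat, [/\ (0 < k)%N, (0 < l)%N, k <> l &
                               forall x, a x ^+ k = a x ^+ l].

Definition CP_clean {X : topologicalType} {R : realType} (P : set (set X)) : Prop :=
  forall f : X -> R, CP P f ->
    exists u e, [/\ CP_unit P u, CP_idem P e & forall x, f x = u x + e x].

Definition CP_weakly_clean {X : topologicalType} {R : realType} (P : set (set X)) : Prop :=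
  forall f : X -> R, CP P f ->
    exists u e, [/\ CP_unit P u, CP_idem P e &
      (forall x, f x = u x + e x) \/ (forall x, f x = u x - e x)].

Definition CP_semiclean {X : topologicalType} {R : realType} (P : set (set X)) : Prop :=
  forall f : X -> R, CP P f ->
    exists u a, [/\ CP_unit P u, CP_periodic P a & forall x, f x = u x + a x].

(** Semiclean implies clean, the other implications being immediate.  A
   periodic real number is 0, 1 or -1.  Given f, write the semiclean
   decomposition 1 - 2f = u + a; at each point there is a choice e(x) in
   {0, 1}, depending only on a(x) and the sign of u(x), for which
   f(x) - e(x) <> 0.  Since a is {0, 1, -1}-valued and u never vanishes, e is
   locally constant wherever a and u are continuous, so e and f - e stay in
   C(X)_P and f = (f - e) + e is a clean decomposition. *)
From HB Require Import structures.
From mathcomp Require Import all_boot all_order all_algebra.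
From mathcomp Require Import all_classical all_reals all_analysis.
From mathcomp Require Import lra.
Set Implicit Arguments. Unset Strict Implicit. Unset Printing Implicit Defensive.
Import Order.TTheory GRing.Theory Num.Theory.
Import numFieldNormedType.Exports.
Local Open Scope classical_set_scope.
Local Open Scope ring_scope.

Lemma eq_exprs_tripotent {R : realDomainType} (y : R) (k l : nat) :
  (0 < k)%N -> (0 < l)%N -> k <> l -> y ^+ k = y ^+ l ->
  y = 0 \/ y = 1 \/ y = -1.
Proof.
wlog lt_kl : k l / (k < l)%N.
  move=> base k0 l0 neq_kl e.
  have [lt|gt|eq_kl] := ltngtP k l; first exact: (base k l).
    exact: (base l k gt l0 k0 (nesym neq_kl) (esym e)).
  by case: neq_kl.
move=> _ _ _ e; have [->|y0] := eqVneq y 0; first by left.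
right; have yX1 : y ^+ (l - k) = 1.
  apply: (@mulfI _ (y ^+ k)); first by rewrite expf_eq0 (negbTE y0) andbF.
  by rewrite -exprD subnKC ?(ltnW lt_kl) // mulr1.
have normy1 : `|y| = 1.
  apply/eqP; rewrite -(@pexpr_eq1 _ _ (l - k)) ?subn_gt0 //.
  by rewrite -normrX yX1 normr1.
have : y ^+ 2 == 1 by rewrite sqr_norm_eq1 normy1.
by rewrite sqrf_eq1 => /orP[] /eqP ->; [left | right].
Qed.

(* If 1 - 2 y = t + a then 2 (y - e) = (1 - 2 e) - a - t: for a = 1 or a = -1
   take 1 - 2 e = a, and for a = 0 give 1 - 2 e the sign opposite to t. *)
Definition clean_idem {R : numDomainType} (a t : R) : R :=
  if (a == -1) || ((a == 0) && (0 < t)) then 1 else 0.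

Lemma clean_idem_idem {R : numDomainType} (a t : R) :
  clean_idem a t * clean_idem a t = clean_idem a t.
Proof. by rewrite /clean_idem; case: ifP; rewrite ?mulr1 ?mulr0. Qed.

Lemma clean_idem_subr_neq0 {R : realDomainType} (y a t : R) :
  a = 0 \/ a = 1 \/ a = -1 -> t != 0 -> 1 - (y + y) = t + a ->
  y - clean_idem a t != 0.
Proof.
move=> a3 t_neq0 e; apply/eqP; rewrite /clean_idem.
have n0 : (0 == -1 :> R) = false by apply/eqP; lra.
have n1 : (1 == -1 :> R) = false by apply/eqP; lra.
have n2 : (1 == 0 :> R) = false by apply/eqP; lra.
have [t_lt0|t_gt0|t0] := ltrgtP t 0; last by rewrite t0 eqxx in t_neq0.
all: by case: a3 e => [|[]] -> e; rewrite ?eqxx ?n0 ?n1 ?n2 /=; lra.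
Qed.

Section near_constant.
Variables (R : realType) (T : Type) (F : set_system T).
Context {FF : Filter F}.

Lemma cvg_int_near_eq (f : T -> R) (l : R) :
  (forall t, f t \is a Num.int) -> l \is a Num.int -> f @ F --> l ->
  \forall t \near F, f t = l.
Proof.
move=> f_int l_int /(@cvgr_dist_lt _ R^o) /(_ 1 ltr01); apply: filterS => t.
apply: contra_ltP => /eqP ft_neq_l; apply: norm_intr_ge1.
- exact: rpredB.
- by rewrite subr_eq0 eq_sym.
Qed.

Lemma cvgr_sign_near (f : T -> R) (l : R) :
  l != 0 -> f @ F --> l -> \forall t \near F, (0 < f t) = (0 < l).
Proof.
move=> l_neq0 fl; have [l_lt0|l_gt0|l_eq0] := ltrgtP l 0.
- by apply: filterS (cvgr_lt _ fl _ l_lt0) => t /lt_gtF.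
- by apply: filterS (cvgr_gt _ fl _ l_gt0) => t ->.
- by rewrite l_eq0 eqxx in l_neq0.
Qed.

End near_constant.

Lemma cvg_notin_closure_discont {X : topologicalType} {R : realType}
  (f : X -> R) (x : X) : ~ closure (discont f) x -> f @ x --> f x.
Proof. by move=> nx; apply: contrapT => nc; apply/nx/subset_closure. Qed.

Section CP_ring.
Variables (X : topologicalType) (R : realType) (P : set (set X)).
Hypothesis hP : closed_ideal P.

Lemma CP_continuous_off (D : set X) (h : X -> R) :
  P D -> closed D -> (forall x, ~ D x -> h @ x --> h x) -> CP P h.
Proof.
case: hP => _ _ _ P_sub PD cD hD.
apply: (P_sub D) => //; first exact: closed_closure.
rewrite [E in _ `<=` E](closure_id D).1 //; apply: closureS => x dx.
by apply: contrapT => nx; apply: dx; exact: hD.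
Qed.

Lemma CP_of_cvg2 (f g h : X -> R) : CP P f -> CP P g ->
  (forall x, f @ x --> f x -> g @ x --> g x -> h @ x --> h x) -> CP P h.
Proof.
have [_ _ P_union _] := hP; move=> Cf Cg hfg.
apply: (CP_continuous_off (P_union _ _ Cf Cg)).
  by apply: closedU; exact: closed_closure.
move=> x /not_orP[nf ng].
by apply: hfg; exact: cvg_notin_closure_discont.
Qed.

Lemma CP_of_cvg1 (f h : X -> R) : CP P f ->
  (forall x, f @ x --> f x -> h @ x --> h x) -> CP P h.
Proof. by move=> Cf hf; apply: (CP_of_cvg2 Cf Cf) => x /hf. Qed.

Lemma CP_unit_of_neq0 (v : X -> R) :
  CP P v -> (forall x, v x != 0) -> CP_unit P v.
Proof.
move=> Cv v_neq0; split=> //; exists (fun x => (v x)^-1); split.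
  by apply: (CP_of_cvg1 Cv) => x; exact: cvgV.
by move=> x; rewrite mulfV.
Qed.

Lemma CP_unit_neq0 (u : X -> R) (x : X) : CP_unit P u -> u x != 0.
Proof.
case=> _ [v [_ uv]]; apply/eqP => u0.
by move: (uv x); rewrite u0 mul0r => /eqP; rewrite eq_sym oner_eq0.
Qed.

Lemma CP_periodic_idem (e : X -> R) : CP_idem P e -> CP_periodic P e.
Proof.
by case=> Ce ee; split=> //; exists 1%N, 2%N; split=> // x; rewrite expr2.
Qed.

Lemma CP_periodic_opp_idem (e : X -> R) :
  CP_idem P e -> CP_periodic P (fun x => - e x).
Proof.
case=> Ce ee; split; first by apply: (CP_of_cvg1 Ce) => x; exact: cvgN.
exists 1%N, 3%N; split=> // x.
by rewrite expr1 !exprS expr0 mulr1 mulrNN ee mulNr ee.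
Qed.

Lemma CP_clean_weakly_clean : @CP_clean X R P -> @CP_weakly_clean X R P.
Proof.
move=> clean f Cf; have [u [e [Uu Ie fue]]] := clean f Cf.
by exists u, e; split=> //; left.
Qed.

Lemma CP_weakly_clean_semiclean :
  @CP_weakly_clean X R P -> @CP_semiclean X R P.
Proof.
move=> wclean f Cf; have [u [e [Uu Ie [fue|fue]]]] := wclean f Cf.
- by exists u, e; split=> //; exact: CP_periodic_idem.
- by exists u, (fun x => - e x); split=> //; exact: CP_periodic_opp_idem.
Qed.

Lemma CP_semiclean_clean : @CP_semiclean X R P -> @CP_clean X R P.
Proof.
move=> sclean f Cf.
have Cg : CP P (fun x => 1 - (f x + f x)).
  by apply: (CP_of_cvg1 Cf) => x fx; apply: cvgB; [exact: cvg_cst | exact: cvgD].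
have [u [a [Uu [Ca [k [l [k0 l0 neq_kl akl]]]] gua]]] := sclean _ Cg.
have a3 x : a x = 0 \/ a x = 1 \/ a x = -1.
  exact: eq_exprs_tripotent k0 l0 neq_kl (akl x).
have a_int x : a x \is a Num.int.
  by case: (a3 x) => [|[]] ->; rewrite ?rpredN ?rpred0 ?rpred1.
pose e x := clean_idem (a x) (u x).
have Ce : CP P e.
  apply: (CP_of_cvg2 Ca Uu.1) => x ax ux; apply: cvg_near_cst.
  apply: filterS2 (cvg_int_near_eq a_int (a_int x) ax)
                  (cvgr_sign_near (CP_unit_neq0 x Uu) ux) => y ay uy.
  by rewrite /e /clean_idem ay uy.
have Cv : CP P (fun x => f x - e x).
  by apply: (CP_of_cvg2 Cf Ce) => x; exact: cvgB.
exists (fun x => f x - e x), e; split.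
- apply: CP_unit_of_neq0 => // x.
  exact: clean_idem_subr_neq0 (a3 x) (CP_unit_neq0 x Uu) (gua x).
- by split=> // x; exact: clean_idem_idem.
- by move=> x; rewrite subrK.
Qed.

End CP_ring.

Theorem theorem3p10 (X : topologicalType) (R : realType) (P : set (set X))
  (hT1 : accessible_space X) (hP : closed_ideal P) :
  (@CP_clean X R P <-> @CP_weakly_clean X R P) /\
  (@CP_weakly_clean X R P <-> @CP_semiclean X R P).
Proof.
have c2w := @CP_clean_weakly_clean X R P.
have w2s := CP_weakly_clean_semiclean hP.
have s2c := CP_semiclean_clean hP.
split; split.
- exact: c2w.
- by move=> /w2s; exact: s2c.
- exact: w2s.
- by move=> /s2c /c2w.
Qed.
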